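(* Let $M\ge0$. In the quotient $R_{M,n}/J_M$, the images of $\{e_\lambda:\lambda\in B^{(k,r)}_M\}$ span; i.e. for every $\lambda\in S^{(k,r)}_M$ the image of $e_\lambda$ is a $\mathbb C$-linear combination of images of $e_\mu$ with $\mu\in B^{(k,r)}_M$.
   Context: Fix integers $n\ge2$, $1\le k\le n-1$, $r\ge2$, $\tau=e^{2\pi\sqrt{-1}/(r-1)}$. Let $P=\mathbb Z^n$ and $P_M=\{\lambda\in P:-M\le\lambda_i\le M\ \forall i\}$. Let $R_{M,n}$ be the $\mathbb C$-vector space with basis $\{e_\lambda:\lambda\in P_M\}$ (identified with $W^{\otimes n}$, $W=\mathrm{span}_{\mathbb C}\{e_d:-M\le d\le M\}$, via $e_\lambda=e_{\lambda_1}\otimes\cdots\otimes e_{\lambda_n}$). Set $e(w)=\sum_{d=-M}^Me_dw^d$ for $w\in\mathbb C^\times$. Let $J_M\subset R_{M,n}$ be the span of all vectors $e(z_1)\otimes\cdots\otimes e(z_n)$ where $z\in(\mathbb C^\times)^n$ is such that for some $i_1<\dots<i_{k+1}$, some $w\in\mathbb C^\times$ and some $p_1,\dots,p_{k+1}\in\{0,\dots,r-2\}$ one has $z_{i_a}=\tau^{p_a}w$ for $1\le a\le k+1$. For $\lambda\in P$, $\rho(\lambda)$ is the unique permutation of $(\frac{n-1}2,\dots,-\frac{n-1}2)$ with $\rho(\lambda)_i>\rho(\lambda)_j$ iff $\lambda_i>\lambda_j$ or ($\lambda_i=\lambda_j$, $i<j$). For $a\ge2,b\ge1$, $(i,j)$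 is a neighborhood of type $(a,b)$ in $\lambda$ if $\rho(\lambda)_i-\rho(\lambda)_j=a-1$ and either $\lambda_i-\lambda_j\le b-1$, or $\lambda_i-\lambda_j=b$ and $j<i$. $S^{(k,r)}$: the $\lambda$ having a neighborhood of type $(k+1,r-1)$; $B^{(k,r)}=P\setminus S^{(k,r)}$; $S^{(k,r)}_M=S^{(k,r)}\cap P_M$, $B^{(k,r)}_M=B^{(k,r)}\cap P_M$. *)

From HB Require Import structures.
From mathcomp Require Import all_boot all_order all_algebra.
From mathcomp Require Import complex.
From mathcomp Require Import reals trigo.

Set Implicit Arguments.
Unset Strict Implicit.
Unset Printing Implicit Defensive.

Import Order.TTheory GRing.Theory Num.Theory.
Local Open Scope ring_scope.

Definition weight (n : nat) := {ffun 'I_n -> int}.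

Definition inPM (n M : nat) (l : weight n) : bool :=
  [forall i, (- (M%:Z) <= l i) && (l i <= M%:Z)].

(* rho(lambda)_i = (n-1)/2 - #{ j | l_j > l_i or (l_j = l_i and j < i) }:
   the unique permutation of ((n-1)/2, ..., -(n-1)/2) with
   rho_i > rho_j iff l_i > l_j or (l_i = l_j and i < j). *)
Definition rank_of (n : nat) (l : weight n) (i : 'I_n) : nat :=
  #|[set j : 'I_n | (l i < l j) || ((l j == l i) && (j < i)%N)]|.

Definition rho (n : nat) (l : weight n) (i : 'I_n) : rat :=
  ((n%:R - 1) / 2%:R) - (rank_of l i)%:R.

Definition neighborhood (n : nat) (a b : nat) (l : weight n) (i j : 'I_n) : Prop :=
  rho l i - rho l j = (a%:R - 1) /\
  ((l i - l j <= b%:Z - 1) \/ (l i - l j = b%:Z /\ (j < i)%N)).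

Definition inS (n k r : nat) (l : weight n) : Prop :=
  exists i j : 'I_n, neighborhood (k.+1) (r.-1) l i j.

Definition inB (n k r : nat) (l : weight n) : Prop := ~ inS k r l.

Section Vectors.
Variable R : realType.
Local Notation C := R[i].
Local Open Scope complex_scope.

Definition tau (r : nat) : C :=
  (cos (2 * pi / (r.-1)%:R) +i* sin (2 * pi / (r.-1)%:R))%C.

(* Elements of R_{M,n} are represented as functions on weights supported on P_M;
   e_lambda is the indicator of lambda. *)
Definition basis_vec (n : nat) (l : weight n) : weight n -> C :=
  fun mu => (mu == l)%:R.

(* e(z_1) (x) ... (x) e(z_n), with e(w) = sum_{d=-M}^{M} e_d w^d *)
Definition ev (n M : nat) (z : 'I_n -> C) : weight n -> C :=
  fun mu => if inPM M mu then \prod_(i < n) (z i) ^ (mu i) else 0.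

(* z generates J_M: z in (C^x)^n and some i_1<...<i_{k+1}, w in C^x,
   p_1..p_{k+1} in {0..r-2} with z_{i_a} = tau^{p_a} w. *)
Definition Jpoint (n k r : nat) (z : 'I_n -> C) : Prop :=
  (forall i, z i != 0) /\
  exists (idx : 'I_k.+1 -> 'I_n) (w : C) (p : 'I_k.+1 -> nat),
    (forall a b : 'I_k.+1, (a < b)%N -> (idx a < idx b)%N) /\
    w != 0 /\
    (forall a, (p a <= r - 2)%N) /\
    (forall a, z (idx a) = tau r ^+ (p a) * w).

End Vectors.

(* Averaging the generators e(z) of J_M over the points
   z_i = zeta_i^(x_i) w^[i in A], where zeta_i runs over the (r-1)-th roots of
   unity for i in A and over N-th roots of unity otherwise and w over N-th roots
   of unity, orthogonality of characters picks out the sum of the e_nu over the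
   nu in P_M that agree with lambda off A, are congruent to lambda mod r-1 on A,
   and have the same sum over A; when |A| > k all these points lie in J_M.
   If (i, j) is a neighborhood of type (k+1, r-1) in lambda and A is the set of
   indices between i and j in the rho-order, every such nu other than lambda
   is strictly smaller for the lexicographic order on
   (sum_m (M^2 - nu_m^2), sum_m m (nu_m + M)).  Induction on this order shows
   that every e_lambda, lambda in P_M, is congruent modulo J_M to a
   combination of e_mu with mu in B_M. *)

From HB Require Import structures.
From mathcomp Require Import all_boot all_order all_algebra.
From mathcomp Require Import complex.
From mathcomp Require Import reals trigo.
From mathcomp Require Import ring lra zify.
From Stdlib Require Import Classical.

Set Implicit Arguments.
Unset Strict Implicit.
Unset Printing Implicit Defensive.

Import Order.TTheory GRing.Theory Num.Theory.
Local Open Scope ring_scope.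

(** * Character sums over roots of unity *)

Section PrimitiveRoots.
Variable F : fieldType.

Lemma prim_root_exprz_eq1 d (z : F) (e : int) : d.-primitive_root z ->
  (z ^ e == 1) = (d%:Z %| e)%Z.
Proof.
move=> prim_z; case: e => m; first by rewrite -(prim_order_dvd prim_z).
by rewrite dvdzE NegzE -invr_expz invr_eq1 -(prim_order_dvd prim_z).
Qed.

Lemma sum_prim_root_exprz d L (z : F) (e : int) : d.-primitive_root z -> (d %| L)%N ->
  \sum_(y < L) (z ^+ y) ^ e = if (d%:Z %| e)%Z then L%:R else 0.
Proof.
move=> prim_z dvd_dL.
under eq_bigr => y _ do rewrite -[(z ^+ y) ^ e]/((z ^ y%:Z) ^ e) exprzAC -[_ ^ y%:Z]/(_ ^+ y).
rewrite -(prim_root_exprz_eq1 _ prim_z); have [->|ze_neq1] := eqVneq (z ^ e) 1.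
  by under eq_bigr do rewrite expr1n; rewrite sumr_const card_ord.
have zeL : (z ^ e) ^+ L = 1.
  rewrite -[_ ^+ L]/((z ^ e) ^ L%:Z) exprzAC -[z ^ L%:Z]/(z ^+ L).
  by case/dvdnP: dvd_dL => c ->; rewrite mulnC exprM (prim_expr_order prim_z) expr1n exp1rz.
apply/eqP; move: (subrX1 (z ^ e) L); rewrite zeL subrr => /esym/eqP.
by rewrite mulf_eq0 subr_eq0 (negPf ze_neq1).
Qed.

Lemma sum_ffun_prod_prim_root_exprz n L (d : 'I_n -> nat) (z : 'I_n -> F)
    (e : 'I_n -> int) :
  (forall i, (d i).-primitive_root (z i)) -> (forall i, (d i %| L)%N) ->
  \sum_(x : {ffun 'I_n -> 'I_L}) \prod_i (z i ^+ x i) ^ e i =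
  if [forall i, ((d i)%:Z %| e i)%Z] then L%:R ^+ n else 0.
Proof.
move=> prim_z dvd_dL; rewrite -(bigA_distr_bigA (fun i (y : 'I_L) => (z i ^+ y) ^ e i)) /=.
under eq_bigr do rewrite (sum_prim_root_exprz _ (prim_z _) (dvd_dL _)).
case: ifP => [/forallP dvd_de | /negbT].
  by rewrite -[in RHS](card_ord n) -prodr_const; apply: eq_bigr => i _; rewrite dvd_de.
by rewrite negb_forall => /existsP [i0 /negPf ndvd]; rewrite (bigD1 i0) //= ndvd mul0r.
Qed.

End PrimitiveRoots.

Section Tau.
Variable R : realType.
Local Open Scope complex_scope.

Lemma expr_cos_sin (t : R) m :
  (cos t +i* sin t) ^+ m = cos (t * m%:R) +i* sin (t * m%:R).
Proof.
elim: m => [|m IH]; first by rewrite expr0 mulr0 cos0 sin0.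
rewrite exprSr IH -natr1 mulrDr mulr1 cosD sinD.
by rewrite [X in X = _]/GRing.mul /=; congr (_ +i* _); rewrite addrC.
Qed.

Lemma cos_sin_neq1 (x : R) : 0 < x < pi *+ 2 -> cos x +i* sin x != 1.
Proof.
case/andP=> x_gt0 x_lt2pi; apply/negP => /eqP [cos1 sin0].
have [x_le_pi|pi_lt_x] := lerP x pi.
  have := @cos_inj R x 0; rewrite !in_itv /= (ltW x_gt0) x_le_pi lexx pi_ge0 cos1 cos0.
  by move=> /(_ isT isT erefl) x0; rewrite x0 ltxx in x_gt0.
have : 0 < sin (x - pi) by apply: sin_gt0_pi; rewrite subr_gt0 pi_lt_x /=; lra.
by rewrite -[x in sin x](subrK pi) sinDpi in sin0; lra.
Qed.

Lemma tau_primitive r : (1 < r)%N -> (r.-1).-primitive_root (tau R r).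
Proof.
move=> r_gt1; set d := r.-1; have d_gt0 : (0 < d)%N by rewrite /d; lia.
have d_neq0 : d%:R != 0 :> R by rewrite pnatr_eq0 -lt0n.
apply/andP; split => //; apply/forallP => i; rewrite unity_rootE /tau expr_cos_sin.
have [i_lt|i_gt|i_eq] := ltngtP i.+1 d; last 2 first.
- by have := ltn_ord i; lia.
- by rewrite i_eq mulfVK // mulr_natl cos2pi sin2pi !eqxx.
rewrite (negPf (cos_sin_neq1 _)) ?(gtn_eqF i_lt) //.
have d_gt0R : (0 < d%:R :> R) by rewrite ltr0n.
rewrite mulr_gt0 ?divr_gt0 ?mulr_gt0 ?pi_gt0 ?ltr0n //=.
rewrite mulrAC ltr_pdivrMr // -mulr_natr.
have : (i.+1%:R < d%:R :> R) by rewrite ltr_nat.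
have := pi_gt0 R; nra.
Qed.

End Tau.

(** * The rho-order *)

Section PrecOrder.
Variables (n : nat) (l : weight n).

(* [prec a b] iff rho(l)_a > rho(l)_b. *)
Definition prec (a b : 'I_n) : bool := (l b < l a) || ((l a == l b) && (a < b)%N).
Definition preceq (a b : 'I_n) : bool := (a == b) || prec a b.
Definition prec_interval (i j : 'I_n) : {set 'I_n} := [set a | preceq i a && preceq a j].

Lemma prec_irr a : ~~ prec a a.
Proof. by rewrite /prec ltxx ltnn andbF. Qed.

Lemma prec_trans a b c : prec a b -> prec b c -> prec a c.
Proof.
rewrite /prec => /orP [h1|/andP [/eqP e1 h1]] /orP [h2|/andP [/eqP e2 h2]]; apply/orP.
- by left; lia.
- by left; lia.
- by left; lia.
- by right; apply/andP; split; [apply/eqP; lia | lia].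
Qed.

Lemma prec_total a b : a != b -> prec a b || prec b a.
Proof.
move=> neq_ab; rewrite /prec; case: (ltgtP (l a) (l b)) => //= _.
by case: (ltngtP a b) => // /val_inj eq_ab; rewrite eq_ab eqxx in neq_ab.
Qed.

Lemma preceq_le a b : preceq a b -> l b <= l a.
Proof. by rewrite /preceq /prec => /orP [/eqP ->|/orP [|/andP [/eqP ->]]] //; apply: ltW. Qed.

Lemma preceq_eq_leq a b : preceq a b -> l a = l b -> (a <= b)%N.
Proof.
rewrite /preceq /prec => /orP [/eqP -> //|/orP [lt_ab eq_ab|/andP [_ /ltnW //]]].
by rewrite eq_ab ltxx in lt_ab.
Qed.

Lemma rank_ofE i : rank_of l i = #|[set c | prec c i]|.
Proof. by apply: eq_card => c; rewrite !inE /prec. Qed.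

Lemma prec_rank a b : prec a b -> (rank_of l a < rank_of l b)%N.
Proof.
move=> prec_ab; rewrite !rank_ofE; apply: proper_card; apply/properP; split.
  by apply/subsetP => c; rewrite !inE => /prec_trans; apply.
by exists a; rewrite !inE // prec_irr.
Qed.

Lemma card_prec_interval i j : prec i j ->
  ((rank_of l j - rank_of l i).+1 <= #|prec_interval i j|)%N.
Proof.
move=> prec_ij; set X := [set c | prec c j]; set Y := [set c | prec c i].
have sub : j |: (X :\: Y) \subset prec_interval i j.
  apply/subsetP => c; rewrite !inE => /orP [/eqP ->|/andP [nYc Xc]].
    by rewrite /preceq eqxx prec_ij orbT.
  rewrite /preceq Xc orbT andbT; have [//|neq_ci] := eqVneq c i.
  by have := prec_total neq_ci; rewrite (negPf nYc) /= => ->.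
apply: leq_trans (subset_leq_card sub); rewrite cardsU1 !inE (negPf (prec_irr j)) /= cardsD.
by rewrite !rank_ofE -/X -/Y andbF /= add1n ltnS leq_sub2l // subset_leq_card // subsetIr.
Qed.

End PrecOrder.

Lemma neighborhood_rank n k b (l : weight n) i j :
  neighborhood k.+1 b l i j -> rank_of l j = (rank_of l i + k)%N.
Proof.
case; rewrite /rho -natr1 => rho_ij _.
by apply/eqP; rewrite -(eqr_nat rat) natrD; apply/eqP; lra.
Qed.

Lemma card_neighborhood_interval n k b (l : weight n) i j : (0 < k)%N ->
  neighborhood k.+1 b l i j -> (k.+1 <= #|prec_interval l i j|)%N.
Proof.
move=> k_gt0 /neighborhood_rank rank_ij.
have prec_ij : prec l i j.
  have /orP [//|prec_ji] : prec l i j || prec l j i.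
    by apply: prec_total; apply/eqP => eq_ij; rewrite eq_ij in rank_ij; lia.
  by have := prec_rank prec_ji; lia.
by apply: leq_trans (card_prec_interval prec_ij); rewrite rank_ij; lia.
Qed.

Section BJSpan.
Variables (R : realType) (n k r M : nat).
Local Notation C := R[i].

Inductive spanBJ : (weight n -> C) -> Prop :=
| spanBJ0 : spanBJ (fun=> 0)
| spanBJ_basis c mu f : inPM M mu -> inB k r mu -> spanBJ f ->
    spanBJ (fun nu => c * basis_vec R mu nu + f nu)
| spanBJ_ev a z f : Jpoint k r z -> spanBJ f ->
    spanBJ (fun nu => a * ev M z nu + f nu)
| spanBJ_ext f g : spanBJ f -> f =1 g -> spanBJ g.

Lemma spanBJD f g : spanBJ f -> spanBJ g -> spanBJ (fun nu => f nu + g nu).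
Proof.
move=> span_f span_g; elim: span_f => {f}.
- by apply: spanBJ_ext span_g _ => nu; rewrite add0r.
- move=> c mu f muM muB _ IH.
  by apply: spanBJ_ext (spanBJ_basis c muM muB IH) _ => nu; rewrite addrA.
- move=> a z f Jz _ IH.
  by apply: spanBJ_ext (spanBJ_ev a Jz IH) _ => nu; rewrite addrA.
- by move=> f f' _ IH eq_f; apply: spanBJ_ext IH _ => nu; rewrite eq_f.
Qed.

Lemma spanBJZ c f : spanBJ f -> spanBJ (fun nu => c * f nu).
Proof.
elim => {f}.
- by apply: spanBJ_ext spanBJ0 _ => nu; rewrite mulr0.
- move=> c' mu f muM muB _ IH.
  by apply: spanBJ_ext (spanBJ_basis (c * c') muM muB IH) _ => nu; rewrite mulrDr mulrA.
- move=> a z f Jz _ IH.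
  by apply: spanBJ_ext (spanBJ_ev (c * a) Jz IH) _ => nu; rewrite mulrDr mulrA.
- by move=> f f' _ IH eq_f; apply: spanBJ_ext IH _ => nu; rewrite eq_f.
Qed.

Lemma spanBJ_sum (I : finType) (P : pred I) (F : I -> weight n -> C) :
  (forall i, P i -> spanBJ (F i)) -> spanBJ (fun nu => \sum_(i | P i) F i nu).
Proof.
move=> span_F; elim: (index_enum I) => [|i s IH].
  by apply: spanBJ_ext spanBJ0 _ => nu; rewrite big_nil.
have span_i : spanBJ (fun nu => (if P i then F i nu else 0) + \sum_(j <- s | P j) F j nu).
  by apply: spanBJD IH; case: (boolP (P i)) => [/span_F|_] //; exact: spanBJ0.
by apply: spanBJ_ext span_i _ => nu; rewrite big_cons; case: ifP; rewrite ?add0r.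
Qed.

Lemma spanBJ_decomposition f : spanBJ f ->
  exists (m1 : nat) (mu : 'I_m1 -> weight n) (c : 'I_m1 -> C)
         (m2 : nat) (z : 'I_m2 -> 'I_n -> C) (a : 'I_m2 -> C),
    (forall t, inPM M (mu t) /\ inB k r (mu t)) /\
    (forall t, Jpoint k r (z t)) /\
    (forall nu : weight n,
       f nu = \sum_(t < m1) c t * basis_vec R (mu t) nu + \sum_(t < m2) a t * ev M (z t) nu).
Proof.
elim => {f}.
- exists 0%N, (fun=> [ffun=> 0]), (fun=> 0), 0%N, (fun=> fun=> 0), (fun=> 0).
  by split; [case | split; [case | move=> nu; rewrite !big_ord0 addr0]].
- move=> c0 mu0 f muM muB _ [m1 [mu [c [m2 [z [a [BM [Jz eq_f]]]]]]]].
  exists m1.+1, (fun t => oapp mu mu0 (unlift ord0 t)), (fun t => oapp c c0 (unlift ord0 t)),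
    m2, z, a.
  split; first by move=> t; case: (unlift ord0 t) => [t'|] //=; exact: BM.
  split => // nu; rewrite big_ord_recl unlift_none eq_f addrA.
  by congr (_ + _ + _); apply: eq_bigr => t _; rewrite liftK.
- move=> a0 z0 f Jz0 _ [m1 [mu [c [m2 [z [a [BM [Jz eq_f]]]]]]]].
  exists m1, mu, c, m2.+1, (fun t => oapp z z0 (unlift ord0 t)),
    (fun t => oapp a a0 (unlift ord0 t)).
  split => //; split; first by move=> t; case: (unlift ord0 t) => [t'|] //=; exact: Jz.
  move=> nu; rewrite big_ord_recl unlift_none eq_f addrCA.
  by congr (_ + (_ + _)); apply: eq_bigr => t _; rewrite liftK.
- move=> f g _ [m1 [mu [c [m2 [z [a [BM [Jz eq_f]]]]]]]] eq_fg.
  by exists m1, mu, c, m2, z, a; do 2!split => //; move=> nu; rewrite -eq_fg.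
Qed.

End BJSpan.

Arguments spanBJ0 {R n k r M}.

(** * Averaging over roots of unity *)

Lemma increasing_family_in n k (A : {set 'I_n}) : (k.+1 <= #|A|)%N ->
  exists idx : 'I_k.+1 -> 'I_n,
    (forall a b : 'I_k.+1, (a < b)%N -> (idx a < idx b)%N) /\ (forall a, idx a \in A).
Proof.
move=> A_big; have [i0 _] : exists i0, i0 \in A by apply/card_gt0P; lia.
have lt_size (a : 'I_k.+1) : (a < size (enum A))%N by rewrite -cardE; have := ltn_ord a; lia.
have sorted_A : sorted ltn (map val (enum A)).
  rewrite -[enum _](eq_filter (mem_enum _)) -(eq_filter (mem_map val_inj _)) -filter_map.
  by rewrite (sorted_filter ltn_trans) // unlock val_ord_enum iota_ltn_sorted.
exists (fun a => nth i0 (enum A) a); split => [a b lt_ab|a]; last by rewrite -mem_enum mem_nth.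
rewrite -!(nth_map i0 (val i0)) //.
by apply: (sorted_ltn_nth ltn_trans) => //; rewrite inE size_map.
Qed.

Definition Jclass n r M (lam : weight n) (A : {set 'I_n}) (nu : weight n) : bool :=
  [&& inPM M nu, [forall m in ~: A, nu m == lam m],
      [forall a in A, ((r.-1)%:Z %| nu a - lam a)%Z]
    & \sum_(a in A) nu a == \sum_(a in A) lam a].

Lemma dvdz_small (N : nat) (e : int) : - N%:Z < e < N%:Z -> (N%:Z %| e)%Z = (e == 0).
Proof.
move=> e_small; apply/idP/eqP => [dvd_Ne|->]; last exact: dvdz0.
apply/eqP/negPn/negP => e_neq0.
have : (N <= `|e|)%N by apply: dvdn_leq; [rewrite absz_gt0 | exact: dvd_Ne].
lia.
Qed.

Lemma sum_in_box n (A : {set 'I_n}) (f : 'I_n -> int) (B : nat) :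
  (forall a, a \in A -> - B%:Z <= f a <= B%:Z) ->
  - (B * n)%N%:Z <= \sum_(a in A) f a <= (B * n)%N%:Z.
Proof.
move=> f_box; have card_A : (#|A| <= n)%N by rewrite -[n in (_ <= n)%N]card_ord max_card.
have : - (B * #|A|)%N%:Z <= \sum_(a in A) f a <= (B * #|A|)%N%:Z.
  have -> : (B * #|A|)%N%:Z = \sum_(a in A) B%:Z by rewrite sumr_const; lia.
  by rewrite -sumrN; apply/andP; split; apply: ler_sum => a /f_box /andP [].
have : (B * #|A| <= B * n)%N by rewrite leq_mul2l card_A orbT.
lia.
Qed.

Lemma exprz_sumr (F : unitRingType) (x : F) (I : finType) (P : pred I) (e : I -> int) :
  x \is a GRing.unit -> x ^ (\sum_(i | P i) e i) = \prod_(i | P i) x ^ e i.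
Proof.
move=> x_unit; apply: (big_rec2 (fun a b => x ^ a = b)) => [|i a b _ <-].
  by rewrite expr0z.
by rewrite exprzDr.
Qed.

Section JRelation.
Variables (R : realType) (n k r M : nat) (lam : weight n) (A : {set 'I_n}).
Hypotheses (r_gt1 : (1 < r)%N) (lamM : inPM M lam).
Local Notation C := R[i].

(* N exceeds every |sum_(a in A) (nu a - lam a)| and |nu i - lam i| for nu, lam in P_M. *)
Let N := (2 * n * M).+1.
Let L := (r.-1 * N)%N.
Let d (i : 'I_n) := if i \in A then r.-1 else N.
Let zeta (i : 'I_n) : C := if i \in A then tau R r else tau R N.+1.
Let w (s : nat) : C := tau R N.+1 ^+ s.
Let point s (x : {ffun 'I_n -> 'I_L}) (i : 'I_n) : C :=
  zeta i ^+ x i * (if i \in A then w s else 1).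
Let coef s (x : {ffun 'I_n -> 'I_L}) : C :=
  w s ^ (- \sum_(a in A) lam a) * \prod_i (zeta i ^+ x i) ^ (- lam i).

Let zeta_primitive i : (d i).-primitive_root (zeta i).
Proof.
by rewrite /d /zeta; case: ifP => _; [exact: tau_primitive | exact: (@tau_primitive R N.+1)].
Qed.

Let zeta_neq0 i : zeta i != 0.
Proof. by rewrite (prim_root_eq0 (zeta_primitive i)) /d; case: ifP; lia. Qed.

Let w_neq0 s : w s != 0.
Proof. by rewrite expf_neq0 // (prim_root_eq0 (@tau_primitive R N.+1 isT)). Qed.

Lemma Jpoint_point s x : (k.+1 <= #|A|)%N -> Jpoint k r (point s x).
Proof.
move=> A_big; split => [i|].
  by rewrite mulf_neq0 ?expf_neq0 //; case: ifP => _; rewrite ?oner_neq0.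
have [idx [idx_inc idxA]] := increasing_family_in A_big.
exists idx, (w s), (fun a => x (idx a) %% r.-1)%N.
split => //; split => //; split => a.
  by have := @ltn_pmod (x (idx a)) r.-1; lia.
by rewrite /point /zeta idxA (prim_expr_mod (tau_primitive R r_gt1)).
Qed.

Lemma coef_ev_point s x nu : inPM M nu ->
  coef s x * ev M (point s x) nu =
  w s ^ (\sum_(a in A) nu a - \sum_(a in A) lam a) *
  \prod_i (zeta i ^+ x i) ^ (nu i - lam i).
Proof.
move=> nuM; have unit_z i : zeta i ^+ x i \is a GRing.unit by rewrite unitfE expf_neq0.
have unit_w : w s \is a GRing.unit by rewrite unitfE.
rewrite /ev nuM; have -> : \prod_i point s x i ^ nu i =
    \prod_i (zeta i ^+ x i) ^ nu i * w s ^ (\sum_(a in A) nu a).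
  rewrite exprz_sumr // [\prod_(i in A) _]big_mkcond -big_split /=.
  apply: eq_bigr => i _; rewrite /point.
  by case: ifP => _; rewrite ?(exprzMl _ (unit_z i) unit_w) ?mulr1.
have -> : \prod_i (zeta i ^+ x i) ^ (nu i - lam i) =
    \prod_i (zeta i ^+ x i) ^ nu i * \prod_i (zeta i ^+ x i) ^ (- lam i).
  by rewrite -big_split; apply: eq_bigr => i _; rewrite exprzDr.
rewrite /coef addrC exprzDr //; ring.
Qed.

Let dvd_dL i : (d i %| L)%N.
Proof. by rewrite /d /L; case: ifP => _; [apply: dvdn_mulr | apply: dvdn_mull]. Qed.

Lemma sum_coef_ev_point nu :
  \sum_(s < N) \sum_(x : {ffun 'I_n -> 'I_L}) coef s x * ev M (point s x) nu =
  (N%:R * L%:R ^+ n) * (Jclass r M lam A nu)%:R.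
Proof.
have [nuM|nuNM] := boolP (inPM M nu); last first.
  rewrite /Jclass (negPf nuNM) mulr0.
  by apply: big1 => s _; apply: big1 => x _; rewrite /ev (negPf nuNM) mulr0.
under eq_bigr do under eq_bigr do rewrite coef_ev_point //.
under eq_bigr do rewrite -mulr_sumr (sum_ffun_prod_prim_root_exprz _ zeta_primitive dvd_dL).
rewrite -mulr_suml (sum_prim_root_exprz _ (@tau_primitive R N.+1 isT) (dvdnn N)).
have nu_box i : - M%:Z <= nu i <= M%:Z by move/forallP: nuM.
have lam_box i : - M%:Z <= lam i <= M%:Z by move/forallP: lamM.
have -> : (N%:Z %| \sum_(a in A) nu a - \sum_(a in A) lam a)%Z =
    (\sum_(a in A) nu a == \sum_(a in A) lam a).
  rewrite -subr_eq0 -sumrB dvdz_small //.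
  have diff_box a : a \in A -> - (2 * M)%N%:Z <= nu a - lam a <= (2 * M)%N%:Z.
    by move=> _; have := nu_box a; have := lam_box a; lia.
  by have := sum_in_box diff_box; rewrite /N; set S := \sum_(a in A) _; lia.
have -> : [forall i, ((d i)%:Z %| nu i - lam i)%Z] =
    [forall m in ~: A, nu m == lam m] && [forall a in A, ((r.-1)%:Z %| nu a - lam a)%Z].
  apply/forallP/andP => [dvd_nu|[/forallP eq_out /forallP dvd_in] i]; last first.
    rewrite /d; case: ifP => Ai; first by have := dvd_in i; rewrite Ai.
    by have := eq_out i; rewrite inE Ai => /eqP ->; rewrite subrr dvdz0.
  split; apply/forallP => i; apply/implyP => Ai; have := dvd_nu i; rewrite /d.
    rewrite inE in Ai; rewrite (negPf Ai) dvdz_small ?subr_eq0 //.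
    by have := nu_box i; have := lam_box i; have := ltn_ord i; rewrite /N; nia.
  by rewrite Ai.
rewrite /Jclass nuM.
case: (_ == _); case: [forall m in ~: A, _]; case: [forall a in A, _];
  by rewrite /= ?mulr0 ?mul0r ?mulr1.
Qed.

Lemma Jclass_spanBJ : (k.+1 <= #|A|)%N ->
  spanBJ k r M (fun nu => (Jclass r M lam A nu)%:R : C).
Proof.
move=> A_big; set K : C := N%:R * L%:R ^+ n.
have K_neq0 : K != 0 by rewrite mulf_neq0 ?expf_neq0 ?pnatr_eq0 // /L muln_eq0; lia.
have span_sum : spanBJ k r M
    (fun nu => \sum_(s < N) \sum_x coef s x * ev M (point s x) nu).
  apply: spanBJ_sum => s _; apply: spanBJ_sum => x _.
  apply: spanBJ_ext (spanBJ_ev (coef s x) (Jpoint_point s x A_big) spanBJ0) _.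
  by move=> nu; rewrite addr0.
apply: spanBJ_ext (spanBJZ K^-1 span_sum) _ => nu.
by rewrite sum_coef_ev_point mulrA mulVf ?mul1r.
Qed.
End JRelation.

Lemma Jclass_refl n r M (lam : weight n) A : inPM M lam -> Jclass r M lam A lam.
Proof.
move=> lamM; rewrite /Jclass lamM eqxx andbT /=.
by apply/andP; split; apply/forall_inP => m _; rewrite ?eqxx ?subrr ?dvdz0.
Qed.

(** * Descent *)

Section MultipleShift.
Variables (q t c : int).
Hypothesis (q_gt0 : 0 < q).

Lemma multiple_shift_ge0 : `|c| <= q -> 0 <= q * t * (q * t + c).
Proof.
move=> /ler_normlP [c_ge c_le]; have [t_gt0|t_le0] := ltrP 0 t.
  by apply: mulr_ge0; nia.
have [t_lt0|t_ge0] := ltrP t 0; first by apply: mulr_le0; nia.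
suff -> : t = 0 by rewrite !mulr0 mul0r.
lia.
Qed.

Lemma multiple_shift_gt0 : `|c| < q -> t != 0 -> 0 < q * t * (q * t + c).
Proof.
move=> /ltr_normlP [c_gt c_lt] t_neq0; have [t_gt0|t_le0] := ltrP 0 t.
  by apply: mulr_gt0; nia.
by rewrite nmulr_rgt0; nia.
Qed.

Lemma multiple_shift_eq0 : `|c| <= q -> t != 0 -> q * t * (q * t + c) = 0 ->
  (t = 1 /\ c = - q) \/ (t = -1 /\ c = q).
Proof.
move=> /ler_normlP [c_ge c_le] t_neq0 /eqP.
rewrite !mulf_eq0 (gt_eqF q_gt0) (negPf t_neq0) /= addr_eq0.
move=> /eqP c_eq; have [t_gt1|t_le1] := ltrP 1 t.
  have : q * 2 <= q * t by rewrite ler_pM2l //; lia.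
  lia.
have [t_ltN1|t_geN1] := ltrP t (-1).
  have : q * t <= q * -2 by rewrite ler_pM2l //; lia.
  lia.
have [t1|t1] : t = 1 \/ t = -1 by lia.
  by left; split => //; rewrite t1 in c_eq; lia.
by right; split => //; rewrite t1 in c_eq; lia.
Qed.

End MultipleShift.

Lemma sum_eq0_exists_lt0 (I : finType) (F : I -> int) (i0 : I) :
  \sum_i F i = 0 -> F i0 != 0 -> exists i, F i < 0.
Proof.
move=> sum0 Fi0_neq0; apply/existsP; apply: contraT; rewrite negb_exists => /forallP F_ge0.
have F_ge0' i : true -> 0 <= F i by rewrite leNgt F_ge0.
by rewrite (psumr_eq0P F_ge0' sum0) ?eqxx in Fi0_neq0.
Qed.

Definition energy n M (mu : weight n) : int := \sum_m (M%:Z ^+ 2 - mu m ^+ 2).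
Definition moment n M (mu : weight n) : int := \sum_(m : 'I_n) m%:Z * (mu m + M%:Z).

Lemma energy_ge0 n M (mu : weight n) : inPM M mu -> 0 <= energy M mu.
Proof. by move=> /forallP mu_box; apply: sumr_ge0 => m _; have := mu_box m; nia. Qed.

Lemma moment_ge0 n M (mu : weight n) : inPM M mu -> 0 <= moment M mu.
Proof. by move=> /forallP mu_box; apply: sumr_ge0 => m _; have := mu_box m; nia. Qed.

Section Descent.
Variables (n r M : nat) (l mu : weight n) (i j : 'I_n).
Hypotheses (r_gt1 : (1 < r)%N)
  (gap : l i - l j <= (r.-1)%:Z - 1 \/ (l i - l j = (r.-1)%:Z /\ (j < i)%N))
  (mu_class : Jclass r M l (prec_interval l i j) mu) (mu_neq : mu != l).

Local Notation A := (prec_interval l i j).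
Let q : int := (r.-1)%:Z.
Let dl m := mu m - l m.
Let c m := 2 * l m - l i - l j.

Let dl_out m : m \notin A -> dl m = 0.
Proof.
case/and4P: mu_class => _ /forall_inP eq_out _ _ m_out.
by rewrite /dl (eqP (eq_out m _)) ?subrr // inE.
Qed.

Let dl_in m : m \in A -> exists t, dl m = q * t.
Proof.
case/and4P: mu_class => _ _ /forall_inP dvd_in _ /dvd_in /dvdzP [t eq_t].
by exists t; rewrite /dl eq_t mulrC.
Qed.

Let sum_dl : \sum_m dl m = 0.
Proof.
case/and4P: mu_class => _ _ _ /eqP eq_sum.
rewrite (bigID (mem A)) /= [X in _ + X]big1 => [|m /dl_out //].
by rewrite sumrB eq_sum subrr addr0.
Qed.

Let c_le m : m \in A -> `|c m| <= l i - l j.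
Proof.
rewrite inE => /andP [/preceq_le le_mi /preceq_le le_jm].
by apply/ler_normlP; rewrite /c; split; lia.
Qed.

Let gap_le : l i - l j <= q.
Proof. by case: gap => [|[-> _]]; rewrite /q; lia. Qed.

Let dl_neq0 : exists2 m, m \in A & dl m != 0.
Proof.
have : ~~ [forall m, mu m == l m].
  by apply: contra mu_neq => /forallP eq_mul; apply/eqP/ffunP => m; apply/eqP.
rewrite negb_forall => /existsP [m]; rewrite -subr_eq0 -/(dl m) => dl_m.
by exists m => //; apply: contraR dl_m => /dl_out ->.
Qed.

Lemma energy_diff : energy M l - energy M mu = \sum_m dl m * (dl m + c m).
Proof.
have -> : \sum_m dl m * (dl m + c m) =
    \sum_m dl m * (dl m + c m) + (l i + l j) * \sum_m dl m by rewrite sum_dl mulr0 addr0.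
rewrite mulr_sumr -big_split /energy -sumrB /=.
by apply: eq_bigr => m _; rewrite /dl /c; ring.
Qed.

Lemma moment_diff : moment M mu - moment M l = \sum_(m : 'I_n) (m%:Z - j%:Z) * dl m.
Proof.
have -> : \sum_(m : 'I_n) (m%:Z - j%:Z) * dl m =
    \sum_(m : 'I_n) (m%:Z - j%:Z) * dl m + j%:Z * \sum_m dl m by rewrite sum_dl mulr0 addr0.
rewrite mulr_sumr -big_split /moment -sumrB /=.
by apply: eq_bigr => m _; rewrite /dl; ring.
Qed.

Let q_gt0 : 0 < q.
Proof. by rewrite /q; lia. Qed.

Let term_ge0 m : 0 <= dl m * (dl m + c m).
Proof.
have [mA|mNA] := boolP (m \in A); last by rewrite dl_out // mul0r.
have [t ->] := dl_in mA; apply: multiple_shift_ge0 => //.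
exact: le_trans (c_le mA) gap_le.
Qed.

Let moment_term m : l i - l j = q -> (j < i)%N -> dl m * (dl m + c m) = 0 ->
  (m%:Z - j%:Z) * dl m <= 0 /\ (dl m < 0 -> (m%:Z - j%:Z) * dl m < 0).
Proof.
move=> gap_eq lt_ji term0.
have [mA|mNA] := boolP (m \in A); last by rewrite dl_out // mulr0 ltxx.
have [t dl_t] := dl_in mA; have [t0|t_neq0] := eqVneq t 0.
  by rewrite dl_t t0 !mulr0 ltxx.
have := mA; rewrite inE => /andP [prec_im prec_mj].
move: term0; rewrite dl_t => /(multiple_shift_eq0 q_gt0) [||[t1 c_eq]|[t1 c_eq]] //.
- by rewrite -gap_eq; exact: c_le.
- have /(preceq_eq_leq prec_mj) le_mj : l m = l j by move: c_eq; rewrite /c; lia.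
  by have := q_gt0; rewrite t1 mulr1; split => [|]; nia.
- have /(preceq_eq_leq prec_im) le_im : l i = l m by move: c_eq; rewrite /c; lia.
  by have := q_gt0; rewrite t1; split => [|_]; nia.
Qed.

Lemma energy_moment_descent :
  energy M mu < energy M l \/ (energy M mu = energy M l /\ moment M mu < moment M l).
Proof.
have [m0 m0A dl_m0] := dl_neq0.
case: gap => [gap_lt|[gap_eq lt_ji]].
  left; have [t dl_t] := dl_in m0A.
  have : 0 < dl m0 * (dl m0 + c m0).
    rewrite dl_t; apply: multiple_shift_gt0 => //.
      by apply: le_lt_trans (c_le m0A) _; rewrite /q; lia.
    by apply: contraNneq dl_m0 => t0; rewrite dl_t t0 mulr0.
  have : 0 <= \sum_(m | m != m0) dl m * (dl m + c m).
    by apply: sumr_ge0 => m _; exact: term_ge0.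
  have := energy_diff; rewrite (bigD1 m0) //=.
  by set S := \sum_(m < n | m != m0) _; lia.
have [pos|sum_le0] := ltrP 0 (\sum_m dl m * (dl m + c m)).
  by left; have := energy_diff; lia.
have sum0 : \sum_m dl m * (dl m + c m) = 0.
  by apply/eqP; rewrite eq_le sum_le0 sumr_ge0.
have terms0 m : dl m * (dl m + c m) = 0 by apply: (psumr_eq0P (fun m _ => term_ge0 m) sum0).
right; split; first by have := energy_diff; rewrite sum0; lia.
have [m1 dl_m1] := sum_eq0_exists_lt0 sum_dl dl_m0.
have := moment_diff; rewrite (bigD1 m1) //=.
have := (moment_term gap_eq lt_ji (terms0 m1)).2 dl_m1.
have : \sum_(m | m != m1) (m%:Z - j%:Z) * dl m <= 0.
  by apply: sumr_le0 => m _; exact: (moment_term gap_eq lt_ji (terms0 m)).1.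
by set S := \sum_(m < n | m != m1) _; lia.
Qed.

End Descent.

Section Box.
Variables (n M : nat).

Definition box_weight (f : {ffun 'I_n -> 'I_(2 * M).+1}) : weight n :=
  [ffun i => (f i : nat)%:Z - M%:Z].

Lemma box_weightP f : inPM M (box_weight f).
Proof. by apply/forallP => i; rewrite ffunE; have := ltn_ord (f i); lia. Qed.

Lemma box_weight_inj : injective box_weight.
Proof.
move=> f g /ffunP eq_fg; apply/ffunP => i; apply: val_inj.
by have := eq_fg i; rewrite !ffunE => /addIr /eqP; rewrite eqz_nat => /eqP.
Qed.

Lemma box_weight_onto nu : inPM M nu -> exists f, box_weight f = nu.
Proof.
move=> /forallP nu_box; exists [ffun i => inord `|(nu i + M%:Z)%R|%N].
apply/ffunP => i; have := nu_box i => nu_i; rewrite !ffunE inordK; last by lia.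
by rewrite gez0_abs ?addrK //; lia.
Qed.

Lemma sum_box_basis_vec (R : realType) (P : pred (weight n)) nu :
  \sum_(f | P (box_weight f)) basis_vec R (box_weight f) nu = (inPM M nu && P nu)%:R.
Proof.
rewrite /basis_vec; have [nuM|nuNM] /= := boolP (inPM M nu); last first.
  by apply: big1 => f _; case: eqP => // eq_nu; rewrite eq_nu box_weightP in nuNM.
have [f0 <-] := box_weight_onto nuM; case: (boolP (P _)) => [Pf0|nPf0].
  rewrite (bigD1 f0) //= eqxx big1 ?addr0 // => f /andP [_ neq_f].
  by rewrite (inj_eq box_weight_inj) eq_sym (negPf neq_f).
apply: big1 => f Pf; rewrite (inj_eq box_weight_inj).
by case: eqP => // eq_f; rewrite eq_f Pf in nPf0.
Qed.

Lemma basis_vec_Jclass (R : realType) r (lam : weight n) A nu : inPM M lam ->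
  basis_vec R lam nu = (Jclass r M lam A nu)%:R -
    \sum_(f | Jclass r M lam A (box_weight f) && (box_weight f != lam))
      basis_vec R (box_weight f) nu.
Proof.
move=> lamM; rewrite (sum_box_basis_vec _ (fun nu => Jclass r M lam A nu && (nu != lam))).
have [->|nu_neq] := eqVneq nu lam; first by rewrite Jclass_refl // lamM /basis_vec eqxx subr0.
rewrite /basis_vec (negPf nu_neq) andbT.
by case: (boolP (Jclass _ _ _ _ _)) => [/and4P [-> _ _ _]|_]; rewrite ?andbF subrr.
Qed.

End Box.

Lemma basis_vec_spanBJ (R : realType) n k r M (lam : weight n) :
  (0 < k)%N -> (1 < r)%N -> inPM M lam -> spanBJ k r M (basis_vec R lam).
Proof.
move=> k_gt0 r_gt1.
suff ind : forall a b (lam' : weight n), inPM M lam' ->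
    `|energy M lam'|%N = a -> `|moment M lam'|%N = b -> spanBJ k r M (basis_vec R lam').
  by move=> lamM; exact: ind erefl erefl.
elim/ltn_ind => a IHa; elim/ltn_ind => b IHb {}lam lamM ea eb.
have [[i [j nb]]|lamB] := classic (inS k r lam); last first.
  by apply: spanBJ_ext (spanBJ_basis 1 lamM lamB spanBJ0) _ => nu; rewrite mul1r addr0.
set A := prec_interval lam i j.
have span_A := Jclass_spanBJ R r_gt1 lamM (card_neighborhood_interval k_gt0 nb).
have span_smaller : spanBJ k r M (fun nu =>
    \sum_(f : {ffun 'I_n -> 'I_(2 * M).+1} |
        Jclass r M lam A (box_weight f) && (box_weight f != lam))
      basis_vec R (box_weight f) nu).
  apply: spanBJ_sum => f /andP [f_class f_neq]; have fM := box_weightP f.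
  have := energy_ge0 fM; have := moment_ge0 fM; have := energy_ge0 lamM; have := moment_ge0 lamM.
  case: (energy_moment_descent r_gt1 nb.2 f_class f_neq) => [lt_e|[eq_e lt_m]] *.
    by apply: (IHa `|energy M (box_weight f)|%N _ _ _ fM erefl erefl); lia.
  by apply: (IHb `|moment M (box_weight f)|%N _ _ fM _ erefl); lia.
apply: spanBJ_ext (spanBJD span_A (spanBJZ (-1) span_smaller)) _ => nu.
by rewrite (basis_vec_Jclass _ r A _ lamM) mulN1r.
Qed.

Theorem proposition5p1 (R : realType) (n k r M : nat)
  (hn : (2 <= n)%N) (hk1 : (1 <= k)%N) (hk2 : (k <= n - 1)%N) (hr : (2 <= r)%N)
  (l : weight n) (hlM : inPM M l) (hlS : inS k r l) :
  exists (m1 : nat) (mu : 'I_m1 -> weight n) (c : 'I_m1 -> R[i])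
         (m2 : nat) (z : 'I_m2 -> 'I_n -> R[i]) (a : 'I_m2 -> R[i]),
    (forall t, inPM M (mu t) /\ inB k r (mu t)) /\
    (forall t, Jpoint k r (z t)) /\
    (forall nu : weight n,
       @basis_vec R n l nu =
       \sum_(t < m1) c t * @basis_vec R n (mu t) nu + \sum_(t < m2) a t * ev M (z t) nu).
Proof. exact: spanBJ_decomposition (basis_vec_spanBJ R hk1 hr hlM). Qed.
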